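(* Let $N\ge2$, $g\ge1$, and let $A(z)=\sum_{k=0}^{g-1}z^kA^{(k)}$ ($A^{(g-1)}\ne0$) be a purely non-diagonal polynomial loop $\mathbb{T}\to\mathrm{U}_N(\mathbb{C})$ of genus $g$. Let $T_i$, $i=0,\dots,N-1$, be the operators on $L^2(\mathbb{T})$ given by $(T_if)(z)=m_i(z)f(z^N)$, $m_i(z)=\sum_{j=0}^{N-1}A_{i,j}(z^N)z^j$. Let $r_0=\lfloor (gN-1)/(N-1)\rfloor$, $\mathcal{K}=\operatorname{span}\{z^{-k}:0\le k\le r_0\}$, $P$ the orthogonal projection onto $\mathcal{K}$, $V_i:=PT_i|_{\mathcal{K}}\in\mathcal{B}(\mathcal{K})$, and $\sigma\colon\mathcal{B}(\mathcal{K})\to\mathcal{B}(\mathcal{K})$, $\sigma(X)=\sum_iV_iXV_i^*$. Then there is no faithful state $\rho$ on $\mathcal{B}(\mathcal{K})$ satisfying $\rho\circ\sigma=\rho$.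
   Context: A polynomial loop $D\colon\mathbb{T}\to\mathrm{U}_d(\mathbb{C})$ is diagonal if $D(z)=V\,\mathrm{diag}(z^{n_0},\dots,z^{n_{d-1}})$ for some $V\in\mathrm{U}_d(\mathbb{C})$ and integers $n_i\ge0$. A polynomial loop $A\colon\mathbb{T}\to\mathrm{U}_N(\mathbb{C})$ is purely non-diagonal if there is no decomposition $N=d_0+b+d_1$ with $d_0>0$ or $d_1>0$, diagonal loops $D_0,D_1$ of sizes $d_0,d_1$, a polynomial loop $B\colon\mathbb{T}\to\mathrm{U}_b(\mathbb{C})$ and $V\in\mathrm{U}_N(\mathbb{C})$ with $A(z)=V\,(D_0(z)\oplus B(z)\oplus D_1(z))$ (block diagonal). $A_{i,j}(z)$ are the entries of $A(z)$; $\mathbb{T}$ is the unit circle with normalized Haar measure. *)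

From HB Require Import structures.
From mathcomp Require Import all_boot all_order all_algebra.
From mathcomp Require Import complex.
From mathcomp Require Import reals.
Set Implicit Arguments. Unset Strict Implicit. Unset Printing Implicit Defensive.
Import Order.TTheory GRing.Theory Num.Theory.
Local Open Scope ring_scope.

Section Defs.
Variable R : realType.
Local Notation C := R[i].

Definition adjmx m n (M : 'M[C]_(m, n)) : 'M[C]_(n, m) := (map_mx Num.conj M)^T.

Definition unitary_mx d (M : 'M[C]_d) : Prop :=
  M *m adjmx M = 1%:M /\ adjmx M *m M = 1%:M.

Definition on_circle (z : C) : Prop := `|z| = 1.

Definition poly_loop d (F : C -> 'M[C]_d) : Prop :=
  (exists (h : nat) (c : nat -> 'M[C]_d),
      forall z, on_circle z -> F z = \sum_(k < h) z ^+ k *: c k) /\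
  (forall z, on_circle z -> unitary_mx (F z)).

Definition diag_loop d (D : C -> 'M[C]_d) : Prop :=
  exists (V : 'M[C]_d) (n : 'I_d -> nat), unitary_mx V /\
    forall z, on_circle z -> D z = V *m diag_mx (\row_i (z ^+ n i)).

Definition block_diag3 d0 b d1 (D0 : 'M[C]_d0) (B : 'M[C]_b) (D1 : 'M[C]_d1)
  : 'M[C]_(d0 + b + d1) :=
  block_mx (block_mx D0 0 0 B) 0 0 D1.

Definition purely_non_diagonal N (A : C -> 'M[C]_N) : Prop :=
  ~ exists (d0 b d1 : nat) (e : (d0 + b + d1)%N = N),
      ((0 < d0)%N \/ (0 < d1)%N) /\
      exists (D0 : C -> 'M[C]_d0) (B : C -> 'M[C]_b) (D1 : C -> 'M[C]_d1)
             (V : 'M[C]_N),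
        diag_loop D0 /\ diag_loop D1 /\ poly_loop B /\ unitary_mx V /\
        forall z, on_circle z ->
          A z = V *m castmx (e, e) (block_diag3 (D0 z) (B z) (D1 z)).

Definition loop_eval N g (Acoef : nat -> 'M[C]_N) (z : C) : 'M[C]_N :=
  \sum_(k < g) z ^+ k *: Acoef k.

Definition entry_poly N g (Acoef : nat -> 'M[C]_N) (i j : 'I_N) : {poly C} :=
  \sum_(k < g) (Acoef k i j)%:P * 'X^k.

Definition m_poly N g (Acoef : nat -> 'M[C]_N) (i : 'I_N) : {poly C} :=
  \sum_(j < N) (entry_poly g Acoef i j \Po 'X^N) * 'X^j.

Definition r0 N g : nat := ((g * N).-1 %/ N.-1)%N.

(* V_i = P T_i |_K, written as a matrix in the orthonormal basis
   e_k = z^{-k} (0 <= k <= r0) of K.  Since (T_i e_k)(z) = m_i(z) z^{-N k},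
   the coefficient of e_m = z^{-m} in T_i e_k is the coefficient of z^{N k - m}
   in m_i (zero if N k < m), and P keeps exactly these coefficients. *)
Definition Vop N g (Acoef : nat -> 'M[C]_N) (i : 'I_N) : 'M[C]_((r0 N g).+1) :=
  \matrix_(m < (r0 N g).+1, k < (r0 N g).+1)
     (if (m <= N * k)%N then (m_poly g Acoef i)`_(N * k - m) else 0).

Definition sigma_map N g (Acoef : nat -> 'M[C]_N) (X : 'M[C]_((r0 N g).+1))
  : 'M[C]_((r0 N g).+1) :=
  \sum_(i < N) (Vop g Acoef i *m X *m adjmx (Vop g Acoef i)).

Definition is_state n (rho : 'M[C]_n -> C) : Prop :=
  (forall (a : C) (X Y : 'M[C]_n), rho (a *: X + Y) = a * rho X + rho Y) /\
  (forall X : 'M[C]_n, 0 <= rho (adjmx X *m X)) /\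
  rho 1%:M = 1.

Definition faithful n (rho : 'M[C]_n -> C) : Prop :=
  forall X : 'M[C]_n, rho (adjmx X *m X) = 0 -> X = 0.

End Defs.

Arguments loop_eval {R N} g Acoef z.
Arguments entry_poly {R N} g Acoef i j.
Arguments m_poly {R N} g Acoef i.
Arguments Vop {R N} g Acoef i.
Arguments sigma_map {R N} g Acoef X.

(* If rho is a faithful sigma-invariant state, look at the rank-one projection
   E onto e_0 = z^0.  Only the constant term A^(0)_{i,0} of m_i reaches e_0, so
   sigma(E) = (sum_i |A^(0)_{i,0}|^2) E, and faithfulness (rho(E) <> 0) forces
   this sum to be 1.  The first column of A(z) is a unit vector on the circle,
   so by Parseval sum_k sum_i |A^(k)_{i,0}|^2 = 1 as well: the first column of A
   is constant.  Then A(1)^* A(z) fixes e_0, hence equals 1 (+) B(z), and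
   A(z) = A(1) (1 (+) B(z)) splits off a diagonal block of size one. *)

From mathcomp Require Import all_boot all_order all_algebra.
From mathcomp Require Import complex reals ring.
Set Implicit Arguments.
Unset Strict Implicit.
Unset Printing Implicit Defensive.
Import Order.TTheory GRing.Theory Num.Theory.
Local Open Scope ring_scope.

Section UnitCircle.
Variable C : numClosedFieldType.

Definition cayley_point (t : nat) : C := (t%:R + 'i) / (t%:R - 'i).

Lemma cayley_denom_neq0 (t : nat) : t%:R - 'i != 0 :> C.
Proof. by rewrite subr_eq0; apply: contraNneq (nonRealCi C) => <-; rewrite realn. Qed.

Lemma norm_cayley_point t : `|cayley_point t| = 1.
Proof.
have conj_denom : (t%:R - 'i : C)^* = t%:R + 'i.
  by rewrite rmorphB /= conjC_nat conjCi opprK.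
by rewrite normf_div -conj_denom norm_conjC divff // normr_eq0 cayley_denom_neq0.
Qed.

Lemma cayley_point_inj : injective cayley_point.
Proof.
move=> s t /eqP; rewrite eqr_div ?cayley_denom_neq0 // => /eqP cross.
have : 2%:R * 'i * (t%:R - s%:R) = 0 :> C.
  have -> : 2%:R * 'i * (t%:R - s%:R) =
            (s%:R + 'i) * (t%:R - 'i) - (t%:R + 'i) * (s%:R - 'i) :> C by ring.
  by rewrite cross subrr.
move/eqP; rewrite !mulf_eq0 pnatr_eq0 (negbTE (neq0Ci C)) subr_eq0 eqr_nat /=.
by move/eqP.
Qed.

Lemma poly_eq0_on_circle (p : {poly C}) :
  (forall z, `|z| = 1 -> p.[z] = 0) -> p = 0.
Proof.
move=> p_circle; apply/eqP; apply: contraT => p_neq0.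
pose rs := map cayley_point (iota 0 (size p)).
have rs_roots : all (root p) rs.
  by apply/allP => _ /mapP [t _ ->]; apply/rootP/p_circle/norm_cayley_point.
have rs_uniq : uniq rs by rewrite map_inj_uniq ?iota_uniq //; apply: cayley_point_inj.
by have := max_poly_roots p_neq0 rs_roots rs_uniq; rewrite size_map size_iota ltnn.
Qed.

(* On the circle conj z = z^-1, so z^n conj(p(z)) is the polynomial below. *)
Definition conj_rev_poly n (p : {poly C}) : {poly C} := \poly_(k < n.+1) (p`_(n - k))^*.

Lemma horner_conj_rev_poly n (p : {poly C}) z :
  `|z| = 1 -> (size p <= n.+1)%N -> (conj_rev_poly n p).[z] = z ^+ n * (p.[z])^*.
Proof.
move=> z1 size_p; rewrite horner_poly (horner_coef_wide _ size_p) rmorph_sum mulr_sumr.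
rewrite [RHS](reindex_inj rev_ord_inj); apply: eq_bigr => k _ /=.
rewrite subSS rmorphM rmorphXn /=.
have zz : z ^+ (n - k) * z^* ^+ (n - k) = 1 by rewrite -exprMn -normCK z1 !expr1n.
have zn : z ^+ n = z ^+ k * z ^+ (n - k) by rewrite -exprD subnKC // -ltnS.
by rewrite zn -mulrA [z ^+ (n - k) * _]mulrCA zz mulr1 mulrC.
Qed.

Lemma sum_sqr_norm_coef_on_circle (I : finType) (P : I -> {poly C}) n :
  (forall i, size (P i) <= n.+1)%N ->
  (forall z, `|z| = 1 -> \sum_i `|(P i).[z]| ^+ 2 = 1) ->
  \sum_i \sum_(k < n.+1) `|(P i)`_k| ^+ 2 = 1.
Proof.
move=> size_P unit_P.
pose q := \sum_i P i * conj_rev_poly n (P i) - 'X^n.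
have q0 : q = 0.
  apply: poly_eq0_on_circle => z z1.
  rewrite hornerD hornerN horner_sum hornerXn.
  under eq_bigr do rewrite hornerM horner_conj_rev_poly // mulrCA -normCK.
  by rewrite -mulr_sumr unit_P // mulr1 subrr.
have := congr1 (fun p : {poly C} => p`_n) q0.
rewrite coef0 coefB coefXn eqxx mulr1n coef_sum => /subr0_eq <-.
apply: eq_bigr => i _; rewrite coefM; apply: eq_bigr => k _.
by rewrite coef_poly ltnS leq_subr subKn ?normCK // -ltnS.
Qed.

Lemma unit_norm_loop_const (I : finType) (P : I -> {poly C}) :
  (forall z, `|z| = 1 -> \sum_i `|(P i).[z]| ^+ 2 = 1) ->
  \sum_i `|(P i)`_0| ^+ 2 = 1 ->
  forall i, P i = ((P i)`_0)%:P.
Proof.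
move=> unit_P unit_P0 i.
pose n := \max_i size (P i).
have size_P j : (size (P j) <= n.+1)%N by apply: leqW; apply: leq_bigmax.
have := sum_sqr_norm_coef_on_circle size_P unit_P.
under eq_bigr do rewrite big_ord_recl.
rewrite big_split /= unit_P0 -{2}[1]addr0 => /addrI /eqP.
rewrite psumr_eq0 => [/allP /(_ i (mem_index_enum _))|]; last first.
  by move=> j _; apply: sumr_ge0 => k _; apply: exprn_ge0.
rewrite psumr_eq0 => [/allP tail0|]; last by move=> k _; apply: exprn_ge0.
apply/polyP => -[|k]; rewrite coefC //=.
have [k_lt_n|n_le_k] := ltnP k n.
  by have := tail0 (Ordinal k_lt_n) (mem_index_enum _); rewrite sqrf_eq0 normr_eq0 => /eqP.
by rewrite nth_default // (leq_trans (size_P i)).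
Qed.

End UnitCircle.

Section Adjoint.
Variable R : realType.
Local Notation C := R[i].

Lemma adjmxE m n (M : 'M[C]_(m, n)) i j : adjmx M i j = (M j i)^*.
Proof. by rewrite !mxE. Qed.

Lemma adjmxK m n (M : 'M[C]_(m, n)) : adjmx (adjmx M) = M.
Proof. by apply/matrixP => i j; rewrite !adjmxE conjCK. Qed.

Lemma adjmxM m n p (M : 'M[C]_(m, n)) (P : 'M[C]_(n, p)) :
  adjmx (M *m P) = adjmx P *m adjmx M.
Proof. by rewrite /adjmx map_mxM trmx_mul. Qed.

Lemma adjmx_block m1 m2 n1 n2 (Aul : 'M[C]_(m1, n1)) (Aur : 'M[C]_(m1, n2))
    (Adl : 'M[C]_(m2, n1)) (Adr : 'M[C]_(m2, n2)) :
  adjmx (block_mx Aul Aur Adl Adr) =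
  block_mx (adjmx Aul) (adjmx Adl) (adjmx Aur) (adjmx Adr).
Proof. by rewrite /adjmx map_block_mx tr_block_mx. Qed.

Lemma adjmx0 m n : adjmx (0 : 'M[C]_(m, n)) = 0.
Proof. by rewrite /adjmx map_mx0 trmx0. Qed.

Lemma adjmx1 n : adjmx (1%:M : 'M[C]_n) = 1%:M.
Proof. by rewrite /adjmx map_mx1 trmx1. Qed.

Lemma unitary_mxM n (M P : 'M[C]_n) :
  unitary_mx M -> unitary_mx P -> unitary_mx (M *m P).
Proof.
move=> [MMadj MadjM] [PPadj PadjP]; split; rewrite adjmxM.
  by rewrite mulmxA -(mulmxA M) PPadj mulmx1 MMadj.
by rewrite mulmxA -(mulmxA _ _ M) MadjM mulmx1 PadjP.
Qed.

Lemma unitary_adjmx n (M : 'M[C]_n) : unitary_mx M -> unitary_mx (adjmx M).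
Proof. by move=> [MMadj MadjM]; split; rewrite adjmxK. Qed.

Lemma unitary_mx1 n : unitary_mx (1%:M : 'M[C]_n).
Proof. by split; rewrite adjmx1 mulmx1. Qed.

Lemma unitary_col_norm n (U : 'M[C]_n) j :
  unitary_mx U -> \sum_i `|U i j| ^+ 2 = 1.
Proof.
move=> [_ /matrixP/(_ j j)]; rewrite !mxE eqxx mulr1n => <-.
by apply: eq_bigr => i _; rewrite adjmxE normCKC.
Qed.

Lemma unitary_block_mx_diag m n (A : 'M[C]_m) (B : 'M[C]_n) :
  unitary_mx (block_mx A 0 0 B) -> unitary_mx B.
Proof.
rewrite /unitary_mx adjmx_block !adjmx0 !mulmx_block (scalar_mx_block m n 1).
by rewrite !mul0mx !mulmx0 !add0r !addr0 => -[/eq_block_mx[_ _ _ ->] /eq_block_mx[_ _ _ ->]].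
Qed.

Lemma unitary_fix_e0_row0 n (U : 'M[C]_n.+1) :
  unitary_mx U -> (forall i, U i ord0 = (i == ord0)%:R) ->
  forall j, U ord0 j = (j == ord0)%:R.
Proof.
move=> [_ /matrixP UadjU] Ucol0 j; have := UadjU j ord0.
rewrite !mxE (bigD1 ord0) //= big1 => [|k /negbTE k_neq0]; last first.
  by rewrite Ucol0 k_neq0 mulr0.
by rewrite Ucol0 eqxx mulr1 addr0 adjmxE => /(congr1 Num.conj); rewrite conjCK conjC_nat.
Qed.

Lemma unitary_fix_e0_block n (U : 'M[C]_(1 + n)) :
  unitary_mx U -> (forall i, U i ord0 = (i == ord0)%:R) ->
  U = block_mx 1%:M 0 0 (drsubmx U).
Proof.
move=> Uunit Ucol0; have Urow0 := unitary_fix_e0_row0 Uunit Ucol0.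
have lshift0 : lshift n (ord0 : 'I_1) = ord0 by apply: val_inj.
rewrite -{1}(submxK U); congr block_mx; apply/matrixP => i j; rewrite !mxE ?ord1 lshift0.
- by rewrite Ucol0.
- by rewrite Urow0.
- by rewrite Ucol0.
Qed.

Lemma adjmx_delta n (i j : 'I_n) : adjmx (delta_mx i j : 'M[C]_n) = delta_mx j i.
Proof. by apply/matrixP => a b; rewrite adjmxE !mxE conjC_nat andbC. Qed.

Lemma mul_delta00_adjmxE n (V : 'M[C]_n.+1) a b :
  (V *m delta_mx ord0 ord0 *m adjmx V) a b = V a ord0 * (V b ord0)^*.
Proof.
rewrite -(mul_delta_mx (ord0 : 'I_1)) mulmxA -(mulmxA _ _ (adjmx V)) -colE -rowE.
by rewrite mxE big_ord1 !mxE.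
Qed.

Lemma faithful_invariant_eigenvalue n (rho : 'M[C]_n -> C) (f : 'M[C]_n -> 'M[C]_n)
    (P : 'M[C]_n) (lambda : C) :
  is_state rho -> faithful rho -> (forall X, rho (f X) = rho X) ->
  adjmx P *m P = P -> P != 0 -> f P = lambda *: P -> lambda = 1.
Proof.
move=> [rho_lin _] rho_faithful rho_inv PadjP P_neq0 fP.
have rho0 : rho 0 = 0.
  by have := rho_lin 1 0 0; rewrite scaler0 addr0 mul1r -{1}[rho 0]addr0 => /addrI.
have rhoP_neq0 : rho P != 0.
  by apply: contra_neq P_neq0 => rhoP0; apply: rho_faithful; rewrite PadjP.
apply: (mulIf rhoP_neq0); rewrite mul1r -[RHS]rho_inv fP.
by rewrite -[lambda *: P]addr0 rho_lin rho0 addr0.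
Qed.

End Adjoint.

Section Loops.
Variable R : realType.
Local Notation C := R[i].

Lemma diag_loop_const1 d : diag_loop (fun _ : C => 1%:M : 'M[C]_d).
Proof.
exists 1%:M, (fun _ => 0%N); split=> [|z _]; first exact: unitary_mx1.
by apply/matrixP => i j; rewrite mul1mx !mxE expr0.
Qed.

Lemma castmx_block_mx0 m (X : 'M[C]_m) (D : 'M[C]_0) (e : (m + 0 = m)%N) :
  castmx (e, e) (block_mx X 0 0 D) = X.
Proof.
apply/matrixP => i j; rewrite castmxE.
have lshift_cast k : cast_ord (esym e) k = lshift 0 k by apply: val_inj.
by rewrite !lshift_cast block_mxEul.
Qed.

Lemma const_col0_not_purely_non_diagonal n (F : C -> 'M[C]_n.+1) :
  poly_loop F -> (forall z, on_circle z -> forall i, F z i ord0 = F 1 i ord0) ->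
  ~ purely_non_diagonal F.
Proof.
move=> [[h [c Fpoly]] Funit] Fcol0; apply.
have circle1 : on_circle (1 : C) by rewrite /on_circle normr1.
have [F1F1adj F1adjF1] := Funit 1 circle1.
pose U z : 'M[C]_(1 + n) := adjmx (F 1) *m F z.
have Uunit z : on_circle z -> unitary_mx (U z).
  by move=> z1; apply: unitary_mxM; [apply: unitary_adjmx|]; apply: Funit.
have Ublock z : on_circle z -> U z = block_mx 1%:M 0 0 (drsubmx (U z)).
  move=> z1; apply: unitary_fix_e0_block (Uunit z z1) _ => i.
  transitivity ((adjmx (F 1) *m F 1) i ord0); last by rewrite F1adjF1 mxE.
  by rewrite !mxE; apply: eq_bigr => k _; rewrite Fcol0.
exists 1%N, n, 0%N, (addn0 (1 + n)); split; first by left.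
exists (fun _ => 1%:M), (fun z => drsubmx (U z)), (fun _ => 1%:M), (F 1).
split; first exact: diag_loop_const1.
split; first exact: diag_loop_const1.
split.
- split=> [|z z1].
    exists h, (fun k => drsubmx (adjmx (F 1) *m c k : 'M_(1 + n))) => z z1.
    rewrite /U (Fpoly z z1) mulmx_sumr /drsubmx !linear_sum.
    by apply: eq_bigr => k _; rewrite -scalemxAr !linearZ.
  by apply: (@unitary_block_mx_diag _ 1 _ 1%:M); rewrite -Ublock //; apply: Uunit.
- split=> [|z z1]; first exact: Funit 1 circle1.
  by rewrite /block_diag3 castmx_block_mx0 -Ublock // /U mulmxA F1F1adj mul1mx.
Qed.

End Loops.

Section TransferOperator.
Variables (R : realType) (n g : nat) (Acoef : nat -> 'M[R[i]]_n.+1).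
Local Notation C := R[i].

Lemma entry_polyE i j : entry_poly g Acoef i j = \poly_(k < g) Acoef k i j.
Proof. by rewrite poly_def; apply: eq_bigr => k _; rewrite mul_polyC. Qed.

Lemma loop_eval_entry z i j : loop_eval g Acoef z i j = (entry_poly g Acoef i j).[z].
Proof.
rewrite entry_polyE horner_poly /loop_eval summxE.
by apply: eq_bigr => k _; rewrite mxE mulrC.
Qed.

Hypothesis g_gt0 : (0 < g)%N.

Lemma coef0_entry_poly i j : (entry_poly g Acoef i j)`_0 = Acoef 0 i j.
Proof. by rewrite entry_polyE coef_poly g_gt0. Qed.

Lemma coef0_m_poly i : (m_poly g Acoef i)`_0 = Acoef 0 i ord0.
Proof.
rewrite -coef0_entry_poly -!horner_coef0 /m_poly horner_sum big_ord_recl big1 => [|j _].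
  by rewrite addr0 hornerM horner_comp !hornerXn exprS mul0r expr0 mulr1.
by rewrite hornerM hornerXn expr0n mulr0.
Qed.

Lemma Vop_col0 i (m : 'I_(r0 n.+1 g).+1) :
  Vop g Acoef i m ord0 = (m == ord0)%:R * Acoef 0 i ord0.
Proof.
rewrite mxE muln0 leqn0; have -> : (nat_of_ord m == 0%N) = (m == ord0) by [].
by case: eqP => _; rewrite ?sub0n ?coef0_m_poly ?mul1r ?mul0r.
Qed.

Lemma sigma_map_delta00 :
  sigma_map g Acoef (delta_mx ord0 ord0) =
  (\sum_i `|Acoef 0 i ord0| ^+ 2) *: delta_mx ord0 ord0.
Proof.
apply/matrixP => a b; rewrite summxE !mxE mulr_suml; apply: eq_bigr => i _.
rewrite mul_delta00_adjmxE !Vop_col0 rmorphM /= conjC_nat normCK.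
by case: (a == ord0); case: (b == ord0); rewrite /= ?mul1r ?mul0r ?mulr0 ?mulr1.
Qed.

Lemma sum_sqr_Acoef0_eq1 (rho : 'M[C]_((r0 n.+1 g).+1) -> C) :
  is_state rho -> faithful rho -> (forall X, rho (sigma_map g Acoef X) = rho X) ->
  \sum_i `|Acoef 0 i ord0| ^+ 2 = 1.
Proof.
move=> rho_state rho_faithful rho_inv.
apply: faithful_invariant_eigenvalue rho_state rho_faithful rho_inv _ _ sigma_map_delta00.
  by rewrite adjmx_delta mul_delta_mx.
by apply/eqP => /matrixP/(_ ord0 ord0)/eqP; rewrite !mxE eqxx oner_eq0.
Qed.

Lemma loop_col0_const :
  (forall z, on_circle z -> unitary_mx (loop_eval g Acoef z)) ->
  \sum_i `|Acoef 0 i ord0| ^+ 2 = 1 ->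
  forall z i, loop_eval g Acoef z i ord0 = Acoef 0 i ord0.
Proof.
move=> A_unit A0_unit z i.
have col_unit w : `|w| = 1 -> \sum_k `|(entry_poly g Acoef k ord0).[w]| ^+ 2 = 1.
  move=> w1; rewrite -(unitary_col_norm ord0 (A_unit w w1)).
  by apply: eq_bigr => k _; rewrite loop_eval_entry.
have col0_unit : \sum_k `|(entry_poly g Acoef k ord0)`_0| ^+ 2 = 1.
  by rewrite -A0_unit; apply: eq_bigr => k _; rewrite coef0_entry_poly.
by rewrite loop_eval_entry (unit_norm_loop_const col_unit col0_unit) hornerC coef0_entry_poly.
Qed.

End TransferOperator.

Theorem corollary6p10 (R : realType) (N g : nat) (Acoef : nat -> 'M[R[i]]_N) :
  (2 <= N)%N -> (1 <= g)%N ->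
  Acoef g.-1 != 0 ->
  poly_loop (loop_eval g Acoef) ->
  purely_non_diagonal (loop_eval g Acoef) ->
  ~ exists rho : 'M[R[i]]_((r0 N g).+1) -> R[i],
      is_state rho /\ faithful rho /\
      (forall X, rho (sigma_map g Acoef X) = rho X).
Proof.
case: N Acoef => [|n] Acoef // _ g_gt0 _ A_loop A_pnd [rho [rho_state [rho_faithful rho_inv]]].
have A0_unit := sum_sqr_Acoef0_eq1 g_gt0 rho_state rho_faithful rho_inv.
have A_col0 := loop_col0_const g_gt0 A_loop.2 A0_unit.
apply: const_col0_not_purely_non_diagonal A_loop _ A_pnd => z _ i.
by rewrite !A_col0.
Qed.
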